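(* Let $H$ be the graph obtained from the complete bipartite graph $K_{4,4}$ by deleting a perfect matching. Then no bipartite graph $G=(A\cup B,E)$ containing $H$ as an induced subgraph admits a Stick representation with the vertices of $A$ as horizontal segments and those of $B$ as vertical segments. In particular, since $H$ is planar, not all planar bipartite graphs are Stick graphs.
   Context: A Stick representation of a bipartite graph $G=(A\cup B,E)$ (with $A$ horizontal and $B$ vertical) assigns to each vertex of $A$ a horizontal segment and to each vertex of $B$ a vertical segment such that the left endpoints of all horizontal segments and the bottom endpoints of all vertical segments lie on a fixed ground line $\ell$ of slope $-1$, and a horizontal and a vertical segment intersect if and only if the corresponding vertices are adjacent in $G$. A Stick graph is a bipartite graph admitting such a representation. *)

From HB Require Import structures.
From mathcomp Require Import all_boot all_order all_algebra.
Set Implicit Arguments. Unset Strict Implicit. Unset Printing Implicit Defensive.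
Import Order.TTheory GRing.Theory Num.Theory.
Local Open Scope ring_scope.

Definition on_ground (R : realFieldType) (c : R) (p : R * R) : Prop :=
  p.1 + p.2 = c.

Definition hseg (R : realFieldType) (x0 y0 len : R) (p : R * R) : Prop :=
  p.2 = y0 /\ x0 <= p.1 <= x0 + len.

Definition vseg (R : realFieldType) (x0 y0 ht : R) (p : R * R) : Prop :=
  p.1 = x0 /\ y0 <= p.2 <= y0 + ht.

Definition stick_rep (R : realFieldType) (A B : finType) (E : A -> B -> bool)
  (c : R) (la : A -> R * R) (lenA : A -> R) (lb : B -> R * R) (htB : B -> R)
  : Prop :=
  (forall a, on_ground c (la a) /\ 0 < lenA a) /\
  (forall b, on_ground c (lb b) /\ 0 < htB b) /\
  (forall a b, E a b <->
     exists p : R * R, hseg (la a).1 (la a).2 (lenA a) p /\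
                       vseg (lb b).1 (lb b).2 (htB b) p).

Definition stick_representable (R : realFieldType) (A B : finType)
  (E : A -> B -> bool) : Prop :=
  exists (c : R) la lenA lb htB, @stick_rep R A B E c la lenA lb htB.

Definition contains_induced_K44_minus_PM (A B : finType) (E : A -> B -> bool)
  : Prop :=
  exists (f : 'I_4 -> A) (g : 'I_4 -> B),
    injective f /\ injective g /\ (forall i j, E (f i) (g j) = (i != j)).

(* Two grounded sticks meet iff the horizontal one starts weakly left of the
   vertical one and reaches it both horizontally and, because both endpoints
   lie on a line of slope -1, vertically.  In a representation of K_{4,4}
   minus a perfect matching, pick a horizontal stick i1 with leftmost start,
   one i4 with rightmost start among the rest, and let j, k be the remaining
   two.  The vertical stick of j meets i1 and i4 but not horizontal j, which
   is only possible if horizontal j ends before vertical j; likewise for k.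
   Then horizontal j must reach vertical k, so vertical k lies left of
   vertical j, and symmetrically vertical j lies left of vertical k. *)

From mathcomp Require Import all_boot all_order all_algebra.
From mathcomp Require Import lra zify.
Import Order.TTheory GRing.Theory Num.Theory.
Set Implicit Arguments. Unset Strict Implicit. Unset Printing Implicit Defensive.
Local Open Scope ring_scope.

(* [x] and [y] are the abscissae of the left endpoint of the horizontal stick
   and of the bottom endpoint of the vertical stick. *)
Definition sticks_meet (R : realFieldType) (x y len ht : R) : bool :=
  [&& x <= y, y <= x + len & y <= x + ht].

Lemma grounded_segments_meetP (R : realFieldType) (c : R) (pa pb : R * R)
    (len ht : R) :
  on_ground c pa -> on_ground c pb ->
  (exists p, hseg pa.1 pa.2 len p /\ vseg pb.1 pb.2 ht p) <->
  sticks_meet pa.1 pb.1 len ht.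
Proof.
rewrite /on_ground => gra grb; split.
- move=> [[x y] [[/= yE /andP[h1 h2]] [/= xE /andP[v1 v2]]]].
  by apply/and3P; split; lra.
- move=> /and3P[m1 m2 m3]; exists (pb.1, pa.2).
  by split; split=> //=; apply/andP; split; lra.
Qed.

Section CrownSticks.

Variables (R : realFieldType) (I : finType) (P Q L h : I -> R).
Hypothesis crown : forall i j, (i != j) = sticks_meet (P i) (Q j) (L i) (h j).

Lemma crown_middle_overshoot (i1 i4 j : I) :
  i1 != j -> i4 != j -> P i1 <= P j -> P j <= P i4 -> P j + L j < Q j.
Proof.
rewrite !crown => /and3P[_ _ low] /and3P[up _ _] le1 le4.
have := crown j j; rewrite eqxx => /esym/negbT/and3P not_meet.
rewrite ltNge; apply/negP => reach; apply: not_meet; split=> //; lra.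
Qed.

Lemma crown_middle_pair_contra (i1 i4 j k : I) :
  [/\ i1 != j, i1 != k, i4 != j, i4 != k & j != k] ->
  [/\ P i1 <= P j, P i1 <= P k, P j <= P i4 & P k <= P i4] -> False.
Proof.
move=> [n1j n1k n4j n4k njk] [le1j le1k lej4 lek4].
have overj := crown_middle_overshoot n1j n4j le1j lej4.
have overk := crown_middle_overshoot n1k n4k le1k lek4.
have /and3P[_ reachjk _] : sticks_meet (P j) (Q k) (L j) (h k) by rewrite -crown.
have /and3P[_ reachkj _] : sticks_meet (P k) (Q j) (L k) (h j).
  by rewrite -crown eq_sym.
lra.
Qed.

Lemma crown_card_le3 : (#|I| <= 3)%N.
Proof.
rewrite leqNgt; apply/negP => I_gt3.
have /card_gt0P[i0 _] : (0 < #|I|)%N by lia.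
have [i1 _ min1] := arg_minP P (isT : xpredT i0).
have /card_gt0P[i0' ne0'1] : (0 < #|[set~ i1]|)%N by rewrite cardsC1; lia.
rewrite in_setC1 in ne0'1.
have [i4 ne41 max4] := arg_maxP P (ne0'1 : [pred i | i != i1] i0').
have : (1 < #|~: [set i1; i4]|)%N.
  move: I_gt3; rewrite -(cardsC [set i1; i4]) cards2.
  by case: (_ != _) => /=; lia.
move=> /card_gt1P[j [k [+ + njk]]]; rewrite !in_setC !in_set2 !negb_or.
move=> /andP[nj1 nj4] /andP[nk1 nk4].
apply: (@crown_middle_pair_contra i1 i4 j k).
- by rewrite ![i1 == _]eq_sym ![i4 == _]eq_sym nj1 nj4 nk1 nk4.
- by split; [exact: min1 | exact: min1 | exact: max4 | exact: max4].
Qed.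

End CrownSticks.

Theorem mainTheorem10 (R : realFieldType) (A B : finType) (E : A -> B -> bool) :
  contains_induced_K44_minus_PM E -> ~ stick_representable R E.
Proof.
move=> [f [g [_ [_ Efg]]]] [c [la [lenA [lb [htB [onA [onB meetE]]]]]]].
pose P i := (la (f i)).1; pose Q j := (lb (g j)).1.
have crown i j : (i != j) = sticks_meet (P i) (Q j) (lenA (f i)) (htB (g j)).
  have meetP := grounded_segments_meetP (lenA (f i)) (htB (g j))
    (onA (f i)).1 (onB (g j)).1.
  by rewrite -Efg; apply/idP/idP => [/meetE/meetP | /meetP/meetE].
by have := crown_card_le3 crown; rewrite card_ord.
Qed.
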